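(* For any lasso automaton $X=(X_1,X_2,\delta_1,\delta_2,\delta_3)$, the largest set of equations $\mathsf{Eq}(X)=(E_1,E_2)$ satisfied by $X$ is a congruence on $(\Sigma^\ast,\Sigma^{\ast+})$, in the sense that $E_1$ is compatible with concatenation on $\Sigma^\ast$ (i.e. is a monoid congruence) and the pair respects the operation $\times:\Sigma^\ast\times\Sigma^{\ast+}\to\Sigma^{\ast+}$, $w\times(u,v)=(wu,v)$: if $(w,w')\in E_1$ and $((u,v),(u',v'))\in E_2$ then $((wu,v),(w'u',v'))\in E_2$.
   Context: $\Sigma$ is a finite alphabet, $\Sigma^{\ast+}=\Sigma^\ast\times\Sigma^+$ the lassos. A lasso automaton is $(X_1,X_2,\delta_1,\delta_2,\delta_3)$ with disjoint $X_1,X_2$, $\delta_1:X_1\times\Sigma\to X_1$, $\delta_2:X_1\times\Sigma\to X_2$, $\delta_3:X_2\times\Sigma\to X_2$; extend $\delta_1,\delta_3$ to words, set $\delta_\circ(x,av)=\delta_3(\delta_2(x,a),v)$ for $x\in X_1$ and $\delta(x,(u,v))=\delta_\circ(\delta_1(x,u),v)$. The initial lasso automaton has carrier $(\Sigma^\ast,\Sigma^{\ast+})$ with transitions $\sigma_1(u,a)=ua$, $\sigma_2(u,a)=(u,a)$, $\sigma_3((u,v),a)=(u,va)$. A set of equations is a bisimulation equivalence $E=(E_1,E_2)$ on this automaton: equivalence relations $E_1$ on $\Sigma^\ast$ and $E_2$ on $\Sigma^{\ast+}$ with $(u,u')\in E_1\Rightarrow(ua,u'a)\in E_1$ and $((u,a),(u',a))\in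 E_2$, and $((u,v),(u',v'))\in E_2\Rightarrow((u,va),(u',v'a))\in E_2$, for all $a\in\Sigma$. $X$ satisfies $E$ if for all $x\in X_1$: $\delta_1(x,u)=\delta_1(x,v)$ for all $(u,v)\in E_1$ and $\delta(x,(u,v))=\delta(x,(u',v'))$ for all $((u,v),(u',v'))\in E_2$. $\mathsf{Eq}(X)$ denotes the largest set of equations satisfied by $X$. *)

From mathcomp Require Import all_boot.
Set Implicit Arguments. Unset Strict Implicit. Unset Printing Implicit Defensive.

Section Lasso.
Variable Sigma : finType.

(* A lasso (u, v) in Sigma^* x Sigma^+ ; the nonempty word v is stored as
   its first letter loop_hd and the rest loop_tl, i.e. v = loop_hd :: loop_tl. *)
Record lasso := Lasso { stem : seq Sigma; loop_hd : Sigma; loop_tl : seq Sigma }.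

Definition loop (l : lasso) : seq Sigma := loop_hd l :: loop_tl l.

(* Lasso automaton (X1, X2, d1, d2, d3); X1, X2 are separate types,
   hence disjoint. *)
Record lasso_aut := LassoAut {
  X1 : Type;
  X2 : Type;
  d1 : X1 -> Sigma -> X1;
  d2 : X1 -> Sigma -> X2;
  d3 : X2 -> Sigma -> X2 }.

Definition d1w (X : lasso_aut) (x : X1 X) (u : seq Sigma) : X1 X := foldl (@d1 X) x u.
Definition d3w (X : lasso_aut) (y : X2 X) (v : seq Sigma) : X2 X := foldl (@d3 X) y v.
Definition dcirc (X : lasso_aut) (x : X1 X) (a : Sigma) (v : seq Sigma) : X2 X :=
  d3w (d2 x a) v.
Definition dlasso (X : lasso_aut) (x : X1 X) (l : lasso) : X2 X :=
  dcirc (d1w x (stem l)) (loop_hd l) (loop_tl l).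

(* transitions of the initial lasso automaton *)
Definition sigma2 (u : seq Sigma) (a : Sigma) : lasso := Lasso u a [::].
Definition sigma3 (l : lasso) (a : Sigma) : lasso :=
  Lasso (stem l) (loop_hd l) (rcons (loop_tl l) a).

Definition equivalence {T : Type} (R : T -> T -> Prop) : Prop :=
  (forall x, R x x) /\ (forall x y, R x y -> R y x) /\
  (forall x y z, R x y -> R y z -> R x z).

(* A set of equations: a bisimulation equivalence on the initial automaton. *)
Definition set_of_equations (E1 : seq Sigma -> seq Sigma -> Prop)
  (E2 : lasso -> lasso -> Prop) : Prop :=
  equivalence E1 /\ equivalence E2 /\
  (forall u u' a, E1 u u' -> E1 (rcons u a) (rcons u' a) /\ E2 (sigma2 u a) (sigma2 u' a)) /\
  (forall l l' a, E2 l l' -> E2 (sigma3 l a) (sigma3 l' a)).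

Definition satisfies (X : lasso_aut) (E1 : seq Sigma -> seq Sigma -> Prop)
  (E2 : lasso -> lasso -> Prop) : Prop :=
  forall x : X1 X,
    (forall u v, E1 u v -> d1w x u = d1w x v) /\
    (forall l l', E2 l l' -> dlasso x l = dlasso x l').

Definition is_Eq (X : lasso_aut) (E1 : seq Sigma -> seq Sigma -> Prop)
  (E2 : lasso -> lasso -> Prop) : Prop :=
  set_of_equations E1 E2 /\ satisfies X E1 E2 /\
  (forall F1 F2, set_of_equations F1 F2 -> satisfies X F1 F2 ->
     (forall u u', F1 u u' -> E1 u u') /\ (forall l l', F2 l l' -> E2 l l')).

Definition lasso_mul (w : seq Sigma) (l : lasso) : lasso :=
  Lasso (w ++ stem l) (loop_hd l) (loop_tl l).

Definition congruence (E1 : seq Sigma -> seq Sigma -> Prop)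
  (E2 : lasso -> lasso -> Prop) : Prop :=
  (forall w w' u u', E1 w w' -> E1 u u' -> E1 (w ++ u) (w' ++ u')) /\
  (forall w w' l l', E1 w w' -> E2 l l' -> E2 (lasso_mul w l) (lasso_mul w' l')).

End Lasso.

(* Eq(X) is the kernel of the behaviour of X: two words are identified when
   they lead every state of X1 to the same state, two lassos when they lead
   every state of X1 to the same state of X2.  Satisfying a set of equations
   means being contained in this kernel, so the kernel is the largest one.
   It is a congruence because prefixing by w amounts to first moving every
   state x to d1(x, w). *)
From mathcomp Require Import all_boot.

Set Implicit Arguments.
Unset Strict Implicit.
Unset Printing Implicit Defensive.

Lemma equivalence_kernel (I T U : Type) (f : I -> T -> U) :
  equivalence (fun t t' => forall i, f i t = f i t').
Proof.
split; first by [].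
split; first by move=> t t' ftt' i; rewrite ftt'.
by move=> t t' t'' ftt' ft't'' i; rewrite ftt' ft't''.
Qed.

Section LassoBehaviour.
Variables (Sigma : finType) (X : lasso_aut Sigma).
Implicit Types (x : X1 X) (u w : seq Sigma) (l : lasso Sigma) (a : Sigma).

Lemma d1w_cat x w u : d1w x (w ++ u) = d1w (d1w x w) u.
Proof. exact: foldl_cat. Qed.

Lemma d1w_rcons x u a : d1w x (rcons u a) = d1 (d1w x u) a.
Proof. exact: foldl_rcons. Qed.

Lemma dlasso_sigma2 x u a : dlasso x (sigma2 u a) = d2 (d1w x u) a.
Proof. by []. Qed.

Lemma dlasso_sigma3 x l a : dlasso x (sigma3 l a) = d3 (dlasso x l) a.
Proof. exact: foldl_rcons. Qed.

Lemma dlasso_mul x w l : dlasso x (lasso_mul w l) = dlasso (d1w x w) l.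
Proof. by rewrite /dlasso /= d1w_cat. Qed.

Definition Eq1 u u' : Prop := forall x, d1w x u = d1w x u'.
Definition Eq2 l l' : Prop := forall x, dlasso x l = dlasso x l'.

Lemma Eq_set_of_equations : set_of_equations Eq1 Eq2.
Proof.
split; first exact: equivalence_kernel.
split; first exact: equivalence_kernel.
split=> [u u' a Eu | l l' a El].
- by split=> x; rewrite ?d1w_rcons ?dlasso_sigma2 Eu.
- by move=> x; rewrite !dlasso_sigma3 El.
Qed.

Lemma satisfiesP E1 E2 :
  satisfies X E1 E2 <->
  (forall u u', E1 u u' -> Eq1 u u') /\ (forall l l', E2 l l' -> Eq2 l l').
Proof.
split=> [sat | [sub1 sub2] x].
- by split=> ? ? E ? ; [apply: (sat _).1 | apply: (sat _).2].
- by split=> ? ? E; [apply: sub1 | apply: sub2].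
Qed.

Lemma Eq_is_Eq : is_Eq X Eq1 Eq2.
Proof.
split; first exact: Eq_set_of_equations.
split; first exact/satisfiesP.
by move=> F1 F2 _ /satisfiesP.
Qed.

Lemma is_Eq_Eq E1 E2 : is_Eq X E1 E2 ->
  (forall u u', E1 u u' <-> Eq1 u u') /\ (forall l l', E2 l l' <-> Eq2 l l').
Proof.
move=> [_ [/satisfiesP [sub1 sub2] max]].
have [sup1 sup2] := max _ _ Eq_set_of_equations Eq_is_Eq.2.1.
by split=> ? ?; split; [apply: sub1 | apply: sup1 | apply: sub2 | apply: sup2].
Qed.

Lemma Eq_congruence : congruence Eq1 Eq2.
Proof.
split=> w w' ? ? Ew Eu x; first by rewrite !d1w_cat Ew Eu.
by rewrite !dlasso_mul Ew Eu.
Qed.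

End LassoBehaviour.

Theorem mainTheorem11 (Sigma : finType) (X : lasso_aut Sigma) :
  (exists E1 E2, is_Eq X E1 E2) /\
  (forall E1 E2, is_Eq X E1 E2 -> congruence E1 E2).
Proof.
split; first by exists (Eq1 X), (Eq2 X); exact: Eq_is_Eq.
move=> E1 E2 /is_Eq_Eq [E1_Eq1 E2_Eq2].
have [cat_Eq1 mul_Eq2] := Eq_congruence X.
split=> w w' ? ? /E1_Eq1 Ew => [/E1_Eq1 Eu | /E2_Eq2 El].
- exact/E1_Eq1/cat_Eq1.
- exact/E2_Eq2/mul_Eq2.
Qed.
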